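(* In the setting described in the context, consider the two problems $$(\mathrm{ACC})\ \max_{\boldsymbol\alpha}\min\Big\{\min_{(i,\theta_b)\in\Xi}W_i(\theta_b)G_i(\theta_b),\ \min_{i\ne i^*,\,\theta_b\in\Theta_{i^*}}G_i(\theta_b),\ \min_{\theta_b\notin\Theta_{i^*}}G_{i^*}(\theta_b)\Big\},$$ $$(\mathrm{FN})\ \max_{\boldsymbol\alpha}\min\Big\{\min_{(i,\theta_b)\in\Xi}W_i(\theta_b)G_i(\theta_b),\ \min_{\theta_b\notin\Theta_{i^*}}G_{i^*}(\theta_b)\Big\},$$ each subject to $\sum_{i,b}\alpha_i(\theta_b)=1$, $\alpha_i(\theta_b)\ge0$. An allocation $\boldsymbol\alpha$ is optimal for (ACC) (respectively (FN)) if and only if: (i) for all $1\le b\le B$, $\alpha_{i^b}^2(\theta_b)/\lambda_{i^b}^2(\theta_b)=\sum_{i\ne i^b}\alpha_i^2(\theta_b)/\lambda_i^2(\theta_b)$; and (ii) for all $(i,\theta_b),(j,\theta_{b'})\in\Xi\cup\Xi^{\mathrm{adv}}$, $W^{\mathrm{ACC}}_i(\theta_b)G_i(\theta_b)=W^{\mathrm{ACC}}_j(\theta_{b'})G_j(\theta_{b'})$ (respectively $W^{\mathrm{FN}}_i(\theta_b)G_i(\theta_b)=W^{\mathrm{FN}}_j(\theta_{b'})G_j(\theta_{b'})$).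
   Context: There are $k\ge2$ solutions and parameter values $\theta_1,\dots,\theta_B$ with probabilities $p_b>0$, $\sum_bp_b=1$. For each $i,b$: $y_i(\theta_b)\in\mathbb R$ and $\lambda_i(\theta_b)>0$. Each $i^b=\arg\min_iy_i(\theta_b)$ unique; $i^*=\arg\max_i\sum_bp_b\mathbf 1\{i=i^b\}$ unique; $\Theta_i=\{\theta_b:i^b=i\}$. For an allocation $\boldsymbol\alpha$ and $i\ne i^b$, $G_i(\theta_b)=\frac{(y_i(\theta_b)-y_{i^b}(\theta_b))^2}{2(\lambda_i^2(\theta_b)/\alpha_i(\theta_b)+\lambda^2_{i^b}(\theta_b)/\alpha_{i^b}(\theta_b))}$, set to $0$ if $\alpha_i(\theta_b)=0$ or $\alpha_{i^b}(\theta_b)=0$. Let $d_j=\sum_bp_b\mathbf 1\{i^*=i^b\}-\sum_bp_b\mathbf 1\{j=i^b\}$, $\Xi=\{(i,\theta_b):i\ne i^*,i\ne i^b\}$, $\Xi^{\mathrm{adv}}=\{(i^*,\theta_b):\theta_b\notin\Theta_{i^*}\}$. For $(i,\theta_b)\in\Xi$: $W_i(\theta_b)=\max\{\min(\min_{j\ne i^*}d_j,d_i/2)/p_b,1\}$ if $\theta_b\in\Theta_{i^*}$, and $W_i(\theta_b)=\max\{d_i/p_b,1\}$ if $\theta_b\notin\Theta_{i^*}$. Modified weights on $\Xi\cup\Xi^{\mathrm{adv}}$: $W^{\mathrm{ACC}}_i(\theta_b)=1$ if $\theta_b\in\Theta_{i^*}$ or $(i,\theta_b)\in\Xi^{\mathrm{adv}}$,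 and $W^{\mathrm{ACC}}_i(\theta_b)=W_i(\theta_b)$ if $(i,\theta_b)\in\Xi$ with $\theta_b\notin\Theta_{i^*}$; $W^{\mathrm{FN}}_i(\theta_b)=W_i(\theta_b)$ if $(i,\theta_b)\in\Xi$ and $=1$ if $(i,\theta_b)\in\Xi^{\mathrm{adv}}$; both are $\infty$ outside $\Xi\cup\Xi^{\mathrm{adv}}$. *)

(* with extended reals (mathcomp-reals' constructive_ereal)
   used only to take minima over finite (possibly empty) index sets. *)
From HB Require Import structures.
From mathcomp Require Import all_boot all_order all_algebra.
From mathcomp Require Import reals constructive_ereal.
Set Implicit Arguments. Unset Strict Implicit. Unset Printing Implicit Defensive.
Import Order.TTheory GRing.Theory Num.Theory.
Local Open Scope ring_scope.

Section Defs.
Variables (R : realType) (k B : nat).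
(* p b = probability of theta_b;  ib b = i^b;  istar = i^* *)
Variables (p : 'I_B -> R) (ib : 'I_B -> 'I_k) (istar : 'I_k).

Definition alloc := 'I_k -> 'I_B -> R.

Definition feasible (a : alloc) : Prop :=
  (forall i b, 0 <= a i b) /\ \sum_(i < k) \sum_(b < B) a i b = 1.

Definition mass (j : 'I_k) : R := \sum_(b < B | ib b == j) p b.

Definition dgap (j : 'I_k) : R := mass istar - mass j.

(* G_i(theta_b) (meaningful for i <> i^b) *)
Definition Gfun (y lam : 'I_k -> 'I_B -> R) (a : alloc) (i : 'I_k) (b : 'I_B) : R :=
  if (a i b == 0) || (a (ib b) b == 0) then 0
  else (y i b - y (ib b) b) ^+ 2 /
       (2 * (lam i b ^+ 2 / a i b + lam (ib b) b ^+ 2 / a (ib b) b)).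

Definition inXi (i : 'I_k) (b : 'I_B) : bool := (i != istar) && (i != ib b).
Definition inXiadv (i : 'I_k) (b : 'I_B) : bool := (i == istar) && (ib b != istar).

Definition mind (i : 'I_k) : R :=
  \big[Num.min/(dgap i / 2)]_(j < k | j != istar) dgap j.

Definition Wfun (i : 'I_k) (b : 'I_B) : R :=
  if ib b == istar then Num.max (mind i / p b) 1
  else Num.max (dgap i / p b) 1.

(* W^ACC and W^FN restricted to Xi \cup Xi^adv (they are +oo outside,
   but they are only used on Xi \cup Xi^adv) *)
Definition WACC (i : 'I_k) (b : 'I_B) : R :=
  if (ib b == istar) || inXiadv i b then 1 else Wfun i b.
Definition WFN (i : 'I_k) (b : 'I_B) : R :=
  if inXiadv i b then 1 else Wfun i b.

Local Open Scope ereal_scope.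

Definition objACC (y lam : 'I_k -> 'I_B -> R) (a : alloc) : \bar R :=
  mine (\big[mine/+oo]_(x : 'I_k * 'I_B | inXi x.1 x.2)
          (Wfun x.1 x.2 * Gfun y lam a x.1 x.2)%:E)
    (mine (\big[mine/+oo]_(x : 'I_k * 'I_B | (x.1 != istar) && (ib x.2 == istar))
             (Gfun y lam a x.1 x.2)%:E)
          (\big[mine/+oo]_(b < B | ib b != istar) (Gfun y lam a istar b)%:E)).

Definition objFN (y lam : 'I_k -> 'I_B -> R) (a : alloc) : \bar R :=
  mine (\big[mine/+oo]_(x : 'I_k * 'I_B | inXi x.1 x.2)
          (Wfun x.1 x.2 * Gfun y lam a x.1 x.2)%:E)
       (\big[mine/+oo]_(b < B | ib b != istar) (Gfun y lam a istar b)%:E).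

Definition optimal (obj : alloc -> \bar R) (a : alloc) : Prop :=
  feasible a /\ forall a' : alloc, feasible a' -> obj a' <= obj a.

Local Close Scope ereal_scope.

Definition balance (lam : 'I_k -> 'I_B -> R) (a : alloc) : Prop :=
  forall b : 'I_B,
    a (ib b) b ^+ 2 / lam (ib b) b ^+ 2 =
    \sum_(i < k | i != ib b) a i b ^+ 2 / lam i b ^+ 2.

Definition equalized (W : 'I_k -> 'I_B -> R) (y lam : 'I_k -> 'I_B -> R)
    (a : alloc) : Prop :=
  forall (i j : 'I_k) (b b' : 'I_B),
    inXi i b || inXiadv i b -> inXi j b' || inXiadv j b' ->
    W i b * Gfun y lam a i b = W j b' * Gfun y lam a j b'.

End Defs.

From HB Require Import structures.
From mathcomp Require Import all_boot all_order all_algebra.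
From mathcomp Require Import reals constructive_ereal.
From mathcomp Require Import boolp classical_sets topology normedtype realfun.
From mathcomp Require Import ring lra.
Set Implicit Arguments. Unset Strict Implicit. Unset Printing Implicit Defensive.
Import Order.TTheory GRing.Theory Num.Theory.
Import numFieldNormedType.Exports.
Local Open Scope ring_scope.

(* Both objectives are the minimum of w_i(theta_b) G_i(theta_b) over all pairs
   with i <> i^b, for positive weights w (W^ACC or W^FN), so it suffices to
   study that max-min problem.  Each G_i(theta_b) is a concave, 1-homogeneous
   function of (alpha_i(theta_b), alpha_{i^b}(theta_b)), hence lies below its
   tangent plane at any positive allocation alpha0.  When alpha0 satisfies the
   balance condition (i), the coefficients of these tangent planes, summed over
   all pairs, add up to the total mass of the allocation; so if w G is constant
   (= z) at alpha0, a weighted mean of the values w G at any feasible alpha is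
   at most z, and alpha0 is optimal.  If alpha is optimal as well, every
   inequality is an equality: w G is constant at alpha and alpha is
   proportional to alpha0 in each column, so alpha is balanced too.  Finally a
   balanced allocation with constant w G exists: in each column it is
   determined by one scalar, given by the intermediate value theorem, and the
   columns are then scaled to total mass 1. *)

Lemma leif_sum2 (R : numDomainType) (I J : finType) (P : I -> pred J)
    (C : I -> J -> bool) (E1 E2 : I -> J -> R) :
    (forall i j, P i j -> E1 i j <= E2 i j ?= iff C i j) ->
  \sum_i \sum_(j | P i j) E1 i j <= \sum_i \sum_(j | P i j) E2 i j
    ?= iff [forall i, [forall (j | P i j), C i j]].
Proof. by move=> leE; apply: leif_sum => i _; apply: leif_sum; apply: leE. Qed.

Lemma sumr_gt0 (R : numDomainType) (I : finType) (F : I -> R) (i0 : I) :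
  (forall i, 0 < F i) -> 0 < \sum_i F i.
Proof.
move=> F_gt0; rewrite (bigD1 i0) //=; apply: lt_le_trans (F_gt0 i0) _.
by rewrite lerDl sumr_ge0 // => i _; apply: ltW.
Qed.

Lemma leif_gap (R : realDomainType) (x y K d : R) :
  0 < K -> y - x = K * d ^+ 2 -> x <= y ?= iff (d == 0).
Proof.
move=> K_gt0 gap; rewrite /Order.leif; split.
  by rewrite -subr_ge0 gap mulr_ge0 ?sqr_ge0 // ltW.
by rewrite eq_sym -subr_eq0 gap mulf_eq0 gt_eqF //= expf_eq0.
Qed.

Lemma tangent_gap (R : numFieldType) (c L M a u x v : R) :
    0 < L -> 0 < M -> 0 < a -> 0 < u -> 0 < x -> 0 < v ->
  let r := (a ^+ 2 / L) / (u ^+ 2 / M) in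
  c / (2 * (L / a + M / u)) * (x + r * v)
    - (a + r * u) * (c / (2 * (L / x + M / v)))
  = c * M * a / (2 * u * (L * u + M * a) * (L * v + M * x)) * (v * a - x * u) ^+ 2.
Proof.
move=> L_gt0 M_gt0 a_gt0 u_gt0 x_gt0 v_gt0 r.
have Lua_gt0 : 0 < L * u + M * a by rewrite addr_gt0 ?mulr_gt0.
have Lvx_gt0 : 0 < L * v + M * x by rewrite addr_gt0 ?mulr_gt0.
have -> : L / a + M / u = (L * u + M * a) / (a * u) by field; rewrite !gt_eqF.
have -> : L / x + M / v = (L * v + M * x) / (x * v) by field; rewrite !gt_eqF.
by rewrite /r; field; rewrite !gt_eqF.
Qed.

Lemma sqr_ratio_continuous (R : realType) (N K s : R) : s != K ->
  {for s, continuous (fun r : R => N * (r / (K - r)) ^+ 2)}.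
Proof.
move=> s_neq; have Ks_neq0 : K - s != 0 by rewrite subr_eq0 eq_sym.
apply: continuousM; first exact: cvg_cst.
apply: (@continuous_comp _ _ _ (fun r : R => r / (K - r)) (fun r : R => r ^+ 2));
  last exact: exprn_continuous.
apply: continuousM; first exact: cvg_id.
by apply: continuousV => //; apply: continuousB; [exact: cvg_cst | exact: cvg_id].
Qed.

Lemma exists_sqr_ratio_sum_eq1 (R : realType) (I : finType) (P : pred I)
    (K N : I -> R) (i0 : I) :
    P i0 -> (forall i, P i -> 0 < K i) -> (forall i, P i -> 0 < N i) ->
  exists2 s, 0 < s /\ (forall i, P i -> s < K i) &
    \sum_(i | P i) N i * (s / (K i - s)) ^+ 2 = 1.
Proof.
move=> P_i0 K_gt0 N_gt0.
have [j P_j K_min] : exists2 j, P j & forall i, P i -> K j <= K i.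
  by case: (arg_minP K P_i0) => j; exists j.
pose phi s := \sum_(i | P i) N i * (s / (K i - s)) ^+ 2.
(* [s1] is chosen so that [s1 / (K j - s1) = q]; then the [j]-th term of
   [phi s1] is [N j * q ^+ 2 >= N j * q = N j + 1]. *)
pose q := 1 + (N j)^-1.
have q_gt0 : 0 < q by rewrite addr_gt0 ?ltr01 ?invr_gt0 ?N_gt0.
pose s1 := q * K j / (1 + q).
have Kj_gt0 := K_gt0 _ P_j.
have q1_gt0 : 0 < 1 + q by rewrite addr_gt0 ?ltr01.
have s1_gt0 : 0 < s1 by rewrite /s1 divr_gt0 ?mulr_gt0.
have s1_lt : s1 < K j.
  by rewrite /s1 ltr_pdivrMr // mulrDr mulr1 [q * _]mulrC ltrDr.
have s1_ratio : s1 / (K j - s1) = q.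
  have Kq_neq0 : K j * (1 + q) - q * K j != 0.
    by rewrite mulrDr mulr1 [q * _]mulrC addrK gt_eqF.
  by rewrite /s1; field; rewrite Kq_neq0 !gt_eqF.
have phi0 : phi 0 = 0 by apply: big1 => i _; rewrite mul0r expr0n mulr0.
have phi_s1 : 1 <= phi s1.
  have Nq : N j * q = N j + 1 by rewrite mulrDr mulr1 mulfV // gt_eqF ?N_gt0.
  have Nj_gt0 := N_gt0 _ P_j.
  rewrite /phi (bigD1 j) //= s1_ratio -[1]addr0 lerD ?sumr_ge0 // => [|i /andP [P_i _]].
    by rewrite expr2 mulrA Nq; nra.
  by rewrite mulr_ge0 ?sqr_ge0 // ltW ?N_gt0.
have lt_K s i : P i -> s <= s1 -> s < K i.
  by move=> P_i s_le; rewrite (le_lt_trans s_le) // (lt_le_trans s1_lt) ?K_min.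
have phi_cont : {within `[0, s1], continuous phi}%classic.
  apply: continuous_in_subspaceT => s; rewrite inE /= in_itv /= => /andP [_ s_le].
  apply: cvg_big => [|i P_i]; first exact: add_continuous.
  by apply: sqr_ratio_continuous; rewrite lt_eqF ?lt_K.
have [s] : exists2 s, (s \in `[0, s1])%R & phi s = 1.
  by apply: IVT (ltW s1_gt0) phi_cont _; rewrite phi0 ge_min le_max ler01 phi_s1 orbT.
rewrite in_itv /= => /andP [s_ge0 s_le] phi_s.
exists s => //; split => [|i P_i]; last exact: lt_K.
rewrite lt_def s_ge0 andbT; apply: contra_eq_neq phi_s => ->.
by rewrite phi0 eq_sym oner_neq0.
Qed.

Section Allocation.
Variables (R : realType) (k B : nat) (y lam : 'I_k -> 'I_B -> R) (ib : 'I_B -> 'I_k).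
Hypotheses (k_ge2 : (2 <= k)%N) (lam_gt0 : forall i b, 0 < lam i b)
  (y_min : forall b i, i != ib b -> y (ib b) b < y i b).

Local Notation G := (Gfun ib y lam).
Implicit Types (a x : alloc R k B).

Lemma exists_neq (j : 'I_k) : exists i : 'I_k, i != j.
Proof.
have k_gt0 : (0 < k)%N by apply: leq_trans k_ge2.
have [->|j_neq] := eqVneq j (Ordinal k_gt0).
  by exists (Ordinal k_ge2).
by exists (Ordinal k_gt0); rewrite eq_sym.
Qed.

Lemma feasible_gt0 a : feasible a -> exists i b, 0 < a i b.
Proof.
case=> a_ge0 a_sum.
have [i /andP [_ /lt0r_neq0/eqP row_neq0]] : exists i, true && (0 < \sum_b a i b).
  by apply: psumr_neq0P => [i _|]; [exact: sumr_ge0 | rewrite a_sum; exact/eqP/oner_neq0].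
have [b /andP [_ ab_gt0]] := psumr_neq0P (fun b _ => a_ge0 i b) row_neq0.
by exists i, b.
Qed.

Lemma Gfun_posE a i b : 0 < a i b -> 0 < a (ib b) b ->
  G a i b = (y i b - y (ib b) b) ^+ 2 /
            (2 * (lam i b ^+ 2 / a i b + lam (ib b) b ^+ 2 / a (ib b) b)).
Proof. by move=> ai_gt0 aib_gt0; rewrite /Gfun !gt_eqF. Qed.

Lemma Gfun_ge0 a i b : (forall i b, 0 <= a i b) -> 0 <= G a i b.
Proof.
move=> a_ge0; rewrite /Gfun; case: ifP => // _.
by rewrite divr_ge0 ?sqr_ge0 // mulr_ge0 // addr_ge0 // divr_ge0 ?sqr_ge0.
Qed.

Lemma sqr_gap_gt0 i b : i != ib b -> 0 < (y i b - y (ib b) b) ^+ 2.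
Proof. by move=> i_off; rewrite exprn_gt0 // subr_gt0 y_min. Qed.

Lemma Gfun_gt0 a i b : i != ib b -> 0 < a i b -> 0 < a (ib b) b -> 0 < G a i b.
Proof.
move=> i_off ai_gt0 aib_gt0; rewrite Gfun_posE // divr_gt0 ?sqr_gap_gt0 //.
by rewrite mulr_gt0 // addr_gt0 // divr_gt0 // exprn_gt0.
Qed.

Lemma Gfun_neq0 a i b : G a i b != 0 -> (a i b != 0) && (a (ib b) b != 0).
Proof. by rewrite /Gfun -negb_or; case: ifP; rewrite ?eqxx. Qed.

Lemma GfunZ a c i b : 0 < c -> G (fun i b => c * a i b) i b = c * G a i b.
Proof.
move=> c_gt0; rewrite /Gfun !mulf_eq0 gt_eqF //=; case: ifP => _; first by rewrite mulr0.
have divZ X Z : X / (c * Z) = c^-1 * (X / Z) by rewrite invfM mulrCA.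
by rewrite !divZ -mulrDr mulrCA invfM invrK mulrCA.
Qed.

Lemma balance_colZ (c : 'I_B -> R) a :
  balance ib lam a -> balance ib lam (fun i b => c b * a i b).
Proof.
move=> bal b.
have sqZ i : (c b * a i b) ^+ 2 / lam i b ^+ 2 = c b ^+ 2 * (a i b ^+ 2 / lam i b ^+ 2).
  by rewrite exprMn mulrA.
by rewrite sqZ (eq_bigr _ (fun i _ => sqZ i)) -big_distrr /= bal.
Qed.

Lemma balance_diag_eq0 a b : balance ib lam a ->
  (a (ib b) b == 0) = [forall (i | i != ib b), a i b == 0].
Proof.
move=> bal.
have sq_eq0 i : (a i b ^+ 2 / lam i b ^+ 2 == 0) = (a i b == 0).
  by rewrite mulf_eq0 invr_eq0 !expf_eq0 /= (gt_eqF (lam_gt0 _ _)) orbF.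
rewrite -sq_eq0 bal; apply/eqP/forall_inP => [sum0 i i_off | all0].
  rewrite -sq_eq0; apply/eqP; apply: (psumr_eq0P _ sum0 i_off) => j _.
  by rewrite divr_ge0 ?sqr_ge0.
by apply: big1 => i i_off; apply/eqP; rewrite sq_eq0 all0.
Qed.

(* [G a i b / tangent a a i b * tangent a x i b] is the tangent plane at [a] of
   the concave, 1-homogeneous map [x |-> G x i b]. *)
Definition ratio a i b : R :=
  (a i b ^+ 2 / lam i b ^+ 2) / (a (ib b) b ^+ 2 / lam (ib b) b ^+ 2).
Definition tangent a x i b : R := x i b + ratio a i b * x (ib b) b.

Lemma Gfun_tangent a x i b :
    i != ib b -> 0 < a i b -> 0 < a (ib b) b -> 0 <= x i b -> 0 <= x (ib b) b ->
  tangent a a i b * G x i b <= G a i b * tangent a x i b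
    ?= iff (x (ib b) b * a i b == x i b * a (ib b) b).
Proof.
move=> i_off ai_gt0 aib_gt0 xi_ge0 xib_ge0.
have ratio_gt0 : 0 < ratio a i b by rewrite /ratio !divr_gt0 // exprn_gt0.
have [|x_zero] := boolP ((0 < x i b) && (0 < x (ib b) b)).
  case/andP=> xi_gt0 xib_gt0; rewrite -subr_eq0.
  have L_gt0 := exprn_gt0 2 (lam_gt0 i b); have M_gt0 := exprn_gt0 2 (lam_gt0 (ib b) b).
  apply: leif_gap; last by rewrite !Gfun_posE // /tangent; exact: tangent_gap.
  have c_gt0 := sqr_gap_gt0 i_off.
  have Lu_Ma_gt0 := addr_gt0 (mulr_gt0 L_gt0 aib_gt0) (mulr_gt0 M_gt0 ai_gt0).
  have Lv_Mx_gt0 := addr_gt0 (mulr_gt0 L_gt0 xib_gt0) (mulr_gt0 M_gt0 xi_gt0).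
  apply: divr_gt0; first exact: mulr_gt0 (mulr_gt0 c_gt0 M_gt0) ai_gt0.
  have two_gt0 : (0 : R) < 2 by rewrite ltr0n.
  exact: mulr_gt0 (mulr_gt0 (mulr_gt0 two_gt0 aib_gt0) Lu_Ma_gt0) Lv_Mx_gt0.
have x0 : x i b = 0 \/ x (ib b) b = 0.
  by move: x_zero; rewrite negb_and -!leNgt => /orP [] ?; [left|right]; apply/le_anti/andP.
have Ga_gt0 := Gfun_gt0 i_off ai_gt0 aib_gt0.
have rx_ge0 := mulr_ge0 (ltW ratio_gt0) xib_ge0.
have -> : G x i b = 0 by rewrite /Gfun; case: x0 => ->; rewrite eqxx ?orbT.
rewrite mulr0 /Order.leif /tangent; split.
  exact: mulr_ge0 (ltW Ga_gt0) (addr_ge0 xi_ge0 rx_ge0).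
rewrite eq_sym mulf_eq0 (gt_eqF Ga_gt0) paddr_eq0 // mulf_eq0 (gt_eqF ratio_gt0) /=.
case: x0 => ->; rewrite eqxx mul0r ?andbT; first by rewrite mulf_eq0 (gt_eqF ai_gt0) orbF.
by rewrite [RHS]eq_sym mulf_eq0 (gt_eqF aib_gt0) orbF.
Qed.

Lemma tangent_sum a x : balance ib lam a -> (forall b, 0 < a (ib b) b) ->
  \sum_b \sum_(i | i != ib b) tangent a x i b = \sum_i \sum_b x i b.
Proof.
move=> bal diag_gt0; rewrite exchange_big; apply: eq_bigr => b _.
have ratio_sum : \sum_(i | i != ib b) ratio a i b = 1.
  rewrite -big_distrl /= -bal mulfV // gt_eqF // divr_gt0 ?exprn_gt0 //.
by rewrite big_split /= -big_distrl /= ratio_sum mul1r [RHS](bigD1 (ib b)) //= addrC.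
Qed.

Lemma tangent_gt0 a i b : (forall i b, 0 < a i b) -> 0 < tangent a a i b.
Proof.
by move=> a_gt0; rewrite addr_gt0 // mulr_gt0 // divr_gt0 // divr_gt0 // exprn_gt0.
Qed.

Variable w : 'I_k -> 'I_B -> R.
Hypothesis w_gt0 : forall i b, i != ib b -> 0 < w i b.

Definition level a z := forall i b, i != ib b -> w i b * G a i b = z.

Lemma balance_level_gt0 a z : feasible a -> balance ib lam a -> level a z ->
  0 < z /\ forall i b, 0 < a i b.
Proof.
move=> a_feas bal lev; have [a_ge0 _] := a_feas.
have [i0 [b a_i0_gt0]] := feasible_gt0 a_feas.
have diag_neq0 : a (ib b) b != 0.
  apply: contraTneq a_i0_gt0 => diag0.
  have [->|i0_off] := eqVneq i0 (ib b); first by rewrite diag0 ltxx.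
  move/eqP: diag0; rewrite balance_diag_eq0 // => /forall_inP /(_ i0 i0_off) /eqP ->.
  by rewrite ltxx.
have [i1 /andP [i1_off ai1_neq0]] : exists i, (i != ib b) && (a i b != 0).
  by apply/existsP; move: diag_neq0; rewrite balance_diag_eq0 // negb_forall_in.
have a_gt0 i b' : a i b' != 0 -> 0 < a i b' by rewrite lt0r a_ge0 andbT.
have z_gt0 : 0 < z by rewrite -(lev i1 b i1_off) mulr_gt0 ?w_gt0 ?Gfun_gt0 ?a_gt0.
split=> // i b'; apply: a_gt0.
have off_neq0 j : j != ib b' -> (a j b' != 0) && (a (ib b') b' != 0).
  move=> j_off; apply: Gfun_neq0; apply: contraTneq z_gt0 => G0.
  by rewrite -(lev j b' j_off) G0 mulr0 ltxx.
have [->|i_off] := eqVneq i (ib b'); last by case/andP: (off_neq0 i i_off).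
by have [j j_off] := exists_neq (ib b'); case/andP: (off_neq0 j j_off).
Qed.

Section LevelBound.
Variables (a0 : alloc R k B) (z : R).
Hypotheses (a0_feas : feasible a0) (a0_bal : balance ib lam a0)
  (a0_gt0 : forall i b, 0 < a0 i b) (a0_lev : level a0 z).

Let weighted_cst c : \sum_b \sum_(i | i != ib b) tangent a0 a0 i b * c = c.
Proof.
under eq_bigr do rewrite -big_distrl /=.
by rewrite -big_distrl /= tangent_sum // a0_feas.2 mul1r.
Qed.

Lemma tangent_mean_leif x : feasible x ->
  \sum_b \sum_(i | i != ib b) tangent a0 a0 i b * (w i b * G x i b) <= z
    ?= iff [forall b, [forall (i | i != ib b),
              x (ib b) b * a0 i b == x i b * a0 (ib b) b]].
Proof.
case=> x_ge0 x_sum.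
have <- : \sum_b \sum_(i | i != ib b) z * tangent a0 x i b = z.
  under eq_bigr do rewrite -big_distrr /=.
  by rewrite -big_distrr /= tangent_sum // x_sum mulr1.
apply: leif_sum2 => b i i_off.
rewrite mulrCA -(a0_lev i_off) -mulrA (mono_leif (ler_pM2l (w_gt0 i_off))).
exact: Gfun_tangent.
Qed.

Lemma level_max x e : feasible x ->
  (forall i b, i != ib b -> e <= w i b * G x i b) -> e <= z.
Proof.
move=> x_feas e_le; apply: le_trans (tangent_mean_leif x_feas).1.
rewrite -[e in e <= _]weighted_cst; apply: ler_sum => b _; apply: ler_sum => i i_off.
by rewrite ler_wpM2l ?e_le // ltW ?tangent_gt0.
Qed.

Lemma level_rigid x : feasible x -> 0 < z ->
    (forall i b, i != ib b -> z <= w i b * G x i b) ->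
  level x z /\ forall i b, i != ib b -> x (ib b) b * a0 i b = x i b * a0 (ib b) b.
Proof.
move=> x_feas z_gt0 z_le.
have [mean_le mean_eq] := tangent_mean_leif x_feas.
have [z_le_mean z_eq] :
    \sum_b \sum_(i | i != ib b) tangent a0 a0 i b * z <=
    \sum_b \sum_(i | i != ib b) tangent a0 a0 i b * (w i b * G x i b)
      ?= iff [forall b, [forall (i | i != ib b), z == w i b * G x i b]].
  apply: leif_sum2 => b i i_off.
  by rewrite (mono_leif (ler_pM2l (tangent_gt0 _ _ a0_gt0))); apply/leif_eq/z_le.
rewrite weighted_cst in z_le_mean z_eq.
have mean_z : \sum_b \sum_(i | i != ib b) tangent a0 a0 i b * (w i b * G x i b) == z.
  by rewrite eq_le mean_le z_le_mean.
move: z_eq mean_eq; rewrite eq_sym mean_z => /esym/forallP z_eq /esym/forallP prop.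
split=> [i b i_off | i b i_off]; apply/eqP.
  by rewrite eq_sym; apply: (forall_inP (z_eq b)).
exact: (forall_inP (prop b)).
Qed.

End LevelBound.

Lemma exists_level1 :
  exists a1, [/\ forall i b, 0 < a1 i b, balance ib lam a1 & level a1 1].
Proof.
(* The witness is [a1 (ib b) b = lam (ib b) b ^+ 2 / s b] and
   [a1 i b = lam i b ^+ 2 / (K i b - s b)]: for any [0 < s b < K i b] this
   gives [w i b * G a1 i b = 1], and balance of column [b] becomes [col b]. *)
pose K i b := (y i b - y (ib b) b) ^+ 2 * w i b / 2.
pose N i b := lam i b ^+ 2 / lam (ib b) b ^+ 2.
have K_gt0 i b : i != ib b -> 0 < K i b.
  by move=> i_off; rewrite divr_gt0 ?ltr0n // mulr_gt0 ?w_gt0 ?sqr_gap_gt0.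
have col b : exists s, [/\ 0 < s, forall i, i != ib b -> s < K i b &
    \sum_(i | i != ib b) N i b * (s / (K i b - s)) ^+ 2 = 1].
  have [i0 i0_off] := exists_neq (ib b).
  have [s [s_gt0 s_lt] s_sum] := @exists_sqr_ratio_sum_eq1 _ _ (fun i => i != ib b)
    (K^~ b) (N^~ b) i0 i0_off (fun i => K_gt0 i b)
    (fun i _ => divr_gt0 (exprn_gt0 2 (lam_gt0 i b)) (exprn_gt0 2 (lam_gt0 (ib b) b))).
  by exists s.
have [s s_spec] := choice col.
pose a1 i b := if i == ib b then lam (ib b) b ^+ 2 / s b
               else lam i b ^+ 2 / (K i b - s b).
have s_gt0 b : 0 < s b by case: (s_spec b).
have Ks_gt0 i b : i != ib b -> 0 < K i b - s b.
  by move=> i_off; case: (s_spec b) => _ s_lt _; rewrite subr_gt0 s_lt.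
have L_gt0 i b : 0 < lam i b ^+ 2 := exprn_gt0 2 (lam_gt0 i b).
have a1_off i b : i != ib b -> a1 i b = lam i b ^+ 2 / (K i b - s b).
  by move=> i_off; rewrite /a1 (negbTE i_off).
have a1_diag b : a1 (ib b) b = lam (ib b) b ^+ 2 / s b by rewrite /a1 eqxx.
have a1_gt0 i b : 0 < a1 i b.
  have [->|i_off] := eqVneq i (ib b); first by rewrite a1_diag divr_gt0.
  by rewrite a1_off ?divr_gt0 ?Ks_gt0.
exists a1; split=> // [b | i b i_off].
  have [_ _ s_sum] := s_spec b.
  transitivity (lam (ib b) b ^+ 2 / s b ^+ 2 *
                \sum_(i | i != ib b) N i b * (s b / (K i b - s b)) ^+ 2).
    by rewrite s_sum mulr1 a1_diag; field; rewrite !gt_eqF.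
  rewrite big_distrr; apply: eq_bigr => i i_off /=.
  by rewrite a1_off // /N; field; rewrite !gt_eqF ?Ks_gt0.
have w_neq0 := gt_eqF (w_gt0 i_off).
have c_eq : (y i b - y (ib b) b) ^+ 2 = 2 * K i b / w i b.
  by rewrite /K; field; rewrite w_neq0.
rewrite Gfun_posE // a1_off // a1_diag c_eq; field.
by rewrite subrK w_neq0 !gt_eqF ?Ks_gt0 ?K_gt0.
Qed.

Lemma exists_balanced_level : (0 < B)%N ->
  exists a0 z, [/\ feasible a0, balance ib lam a0 & level a0 z].
Proof.
move=> B_gt0; have [a1 [a1_gt0 a1_bal a1_lev]] := exists_level1.
pose T := \sum_i \sum_b a1 i b.
have T_gt0 : 0 < T.
  pose b0 := Ordinal B_gt0.
  by apply: (sumr_gt0 (ib b0)) => i; apply: (sumr_gt0 b0).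
exists (fun i b => T^-1 * a1 i b), T^-1; split.
- split=> [i b|]; first by rewrite mulr_ge0 ?invr_ge0 ?ltW.
  under eq_bigr do rewrite -big_distrr /=.
  by rewrite -big_distrr /= mulVf ?gt_eqF.
- exact: balance_colZ.
- by move=> i b i_off; rewrite GfunZ ?invr_gt0 // mulrCA a1_lev // mulr1.
Qed.

Local Open Scope ereal_scope.

Section Optimality.
Variable Obj : alloc R k B -> \bar R.
Hypothesis Obj_geP : forall e a, (forall i b, (0 <= a i b)%R) ->
  e <= Obj a <-> forall i b, i != ib b -> e <= (w i b * G a i b)%:E.

Lemma level_le_Obj a z : feasible a -> level a z -> z%:E <= Obj a.
Proof. by move=> [a_ge0 _] lev; apply/Obj_geP => // i b i_off; rewrite lev. Qed.

Lemma Obj_le_level a0 z x : feasible a0 -> balance ib lam a0 -> level a0 z ->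
  feasible x -> Obj x <= z%:E.
Proof.
move=> a0_feas a0_bal a0_lev x_feas; have [x_ge0 _] := x_feas.
have [_ a0_gt0] := balance_level_gt0 a0_feas a0_bal a0_lev.
have Obj_le := (@Obj_geP _ _ x_ge0).1 (lexx (Obj x)).
case E: (Obj x) => [r| |]; last by rewrite leNye.
  rewrite lee_fin; apply: (level_max a0_feas a0_bal a0_gt0 a0_lev x_feas).
  by move=> i b i_off; rewrite -lee_fin -E Obj_le.
have [i [b _]] := feasible_gt0 x_feas; have [j j_off] := exists_neq (ib b).
by have := Obj_le j b j_off; rewrite E leye_eq.
Qed.

Lemma optimal_iff_balance_level a : feasible a ->
  optimal Obj a <-> balance ib lam a /\ exists z, level a z.
Proof.
move=> a_feas; split=> [[_ a_opt] | [a_bal [z a_lev]]]; last first.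
  split=> // x x_feas; apply: le_trans (Obj_le_level a_feas a_bal a_lev x_feas) _.
  exact: level_le_Obj.
have B_gt0 : (0 < B)%N.
  by have [_ [b _]] := feasible_gt0 a_feas; exact: leq_ltn_trans (leq0n b) (ltn_ord b).
have [a0 [z [a0_feas a0_bal a0_lev]]] := exists_balanced_level B_gt0.
have [z_gt0 a0_gt0] := balance_level_gt0 a0_feas a0_bal a0_lev.
have z_le i b : i != ib b -> (z <= w i b * G a i b)%R.
  rewrite -lee_fin; apply: (@Obj_geP _ _ a_feas.1).1.
  exact: le_trans (level_le_Obj a0_feas a0_lev) (a_opt _ a0_feas).
have [a_lev a_prop] := level_rigid a0_feas a0_bal a0_gt0 a0_lev a_feas z_gt0 z_le.
split; last by exists z.
have -> : a = (fun i b => a (ib b) b / a0 (ib b) b * a0 i b)%R.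
  apply/funext => i; apply/funext => b.
  have [->|i_off] := eqVneq i (ib b); first by rewrite divfK ?gt_eqF.
  by rewrite mulrAC a_prop // mulfK ?gt_eqF.
exact: balance_colZ.
Qed.

End Optimality.

End Allocation.

Section Objectives.
Variables (R : realType) (k B : nat) (y lam : 'I_k -> 'I_B -> R) (p : 'I_B -> R)
  (ib : 'I_B -> 'I_k) (istar : 'I_k).

Local Notation G := (Gfun ib y lam).

Lemma inXi_or_adv i b : inXi ib istar i b || inXiadv ib istar i b = (i != ib b).
Proof.
rewrite /inXi /inXiadv; have [->|i_ns] := eqVneq i istar; last by rewrite orbF.
by rewrite eq_sym.
Qed.

Lemma equalizedE W (a : alloc R k B) :
  equalized ib istar W y lam a <-> exists z, level y lam ib W a z.
Proof.
rewrite /equalized; split=> [eqW | [z lev] i j b b']; last first.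
  by rewrite !inXi_or_adv => i_off j_off; rewrite !lev.
have [[i0 [b0 off0]] | no_pair] := pselect (exists i b, i != ib b).
  by exists (W i0 b0 * G a i0 b0) => i b i_off; apply: eqW; rewrite inXi_or_adv.
by exists 0 => i b i_off; case: no_pair; exists i, b.
Qed.

Lemma Wfun_ge1 i b : 1 <= Wfun p ib istar i b.
Proof. by rewrite /Wfun; case: ifP => _; rewrite le_max lexx orbT. Qed.

Lemma WACC_gt0 i b : 0 < WACC p ib istar i b.
Proof.
by rewrite /WACC; case: ifP => _; rewrite ?ltr01 // (lt_le_trans ltr01) ?Wfun_ge1.
Qed.

Lemma WFN_gt0 i b : 0 < WFN p ib istar i b.
Proof.
by rewrite /WFN; case: ifP => _; rewrite ?ltr01 // (lt_le_trans ltr01) ?Wfun_ge1.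
Qed.

Local Open Scope ereal_scope.

Lemma objACC_geP e (a : alloc R k B) : (forall i b, (0 <= a i b)%R) ->
  e <= objACC p ib istar y lam a <->
  forall i b, i != ib b -> e <= (WACC p ib istar i b * G a i b)%:E.
Proof.
move=> a_ge0; rewrite /objACC !le_min; split.
  case/and3P=> /bigmin_geP [_ e_Xi] /bigmin_geP [_ e_star] /bigmin_geP [_ e_adv] i b i_off.
  rewrite /WACC /inXiadv; have [i_star | i_ns] := eqVneq i istar.
    have b_ns : ib b != istar by rewrite -i_star eq_sym.
    by rewrite i_star b_ns orbT mul1r e_adv.
  have [b_star | b_ns] := eqVneq (ib b) istar.
    by rewrite mul1r; apply: (e_star (i, b)); rewrite /= i_ns; apply/eqP.
  by rewrite orbF; apply: (e_Xi (i, b)); rewrite /inXi /= i_ns i_off.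
move=> e_le; apply/and3P; split; apply: le_bigmin (leey _) _.
- move=> [i b] /andP [/= i_ns i_off]; have := e_le i b i_off.
  rewrite /WACC /inXiadv (negbTE i_ns) orbF; case: ifP => // _; rewrite mul1r => e_G.
  by rewrite (le_trans e_G) // lee_fin ler_peMl ?Wfun_ge1 ?Gfun_ge0.
- move=> [i b] /andP [/= i_ns /eqP b_star].
  have i_off : i != ib b by rewrite b_star.
  by have := e_le i b i_off; rewrite /WACC b_star eqxx mul1r.
- move=> b b_ns; have i_off : istar != ib b by rewrite eq_sym.
  by have := e_le istar b i_off; rewrite /WACC /inXiadv eqxx b_ns orbT mul1r.
Qed.

Lemma objFN_geP e (a : alloc R k B) : (forall i b, (0 <= a i b)%R) ->
  e <= objFN p ib istar y lam a <->
  forall i b, i != ib b -> e <= (WFN p ib istar i b * G a i b)%:E.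
Proof.
move=> a_ge0; rewrite /objFN !le_min; split.
  case/andP=> /bigmin_geP [_ e_Xi] /bigmin_geP [_ e_adv] i b i_off.
  rewrite /WFN /inXiadv; have [i_star | i_ns] := eqVneq i istar.
    have b_ns : ib b != istar by rewrite -i_star eq_sym.
    by rewrite i_star b_ns mul1r e_adv.
  by apply: (e_Xi (i, b)); rewrite /inXi /= i_ns i_off.
move=> e_le; apply/andP; split; apply: le_bigmin (leey _) _.
- move=> [i b] /andP [/= i_ns i_off].
  by have := e_le i b i_off; rewrite /WFN /inXiadv (negbTE i_ns).
- move=> b b_ns; have i_off : istar != ib b by rewrite eq_sym.
  by have := e_le istar b i_off; rewrite /WFN /inXiadv eqxx b_ns mul1r.
Qed.

End Objectives.

Theorem theorem5 (R : realType) (k B : nat)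
    (y lam : 'I_k -> 'I_B -> R) (p : 'I_B -> R)
    (ib : 'I_B -> 'I_k) (istar : 'I_k) (alpha : 'I_k -> 'I_B -> R) :
  (2 <= k)%N ->
  (forall b, 0 < p b) -> \sum_(b < B) p b = 1 ->
  (forall i b, 0 < lam i b) ->
  (* i^b is the unique argmin of y_.(theta_b) *)
  (forall b i, i != ib b -> y (ib b) b < y i b) ->
  (* i^* is the unique argmax of sum_b p_b 1{i = i^b} *)
  (forall j, j != istar -> mass p ib j < mass p ib istar) ->
  feasible alpha ->
  (optimal (objACC p ib istar y lam) alpha <->
     balance ib lam alpha /\ equalized ib istar (WACC p ib istar) y lam alpha) /\
  (optimal (objFN p ib istar y lam) alpha <->
     balance ib lam alpha /\ equalized ib istar (WFN p ib istar) y lam alpha).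
Proof.
move=> k_ge2 _ _ lam_gt0 y_min _ alpha_feas; rewrite !equalizedE.
split; apply: optimal_iff_balance_level => //.
- move=> i b _; exact: WACC_gt0.
- exact: objACC_geP.
- move=> i b _; exact: WFN_gt0.
- exact: objFN_geP.
Qed.
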